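(* Let $I\subseteq\mathbb{R}$ be an interval, $p\in I$, and let $f: I\to\mathbb{R}$ be continuous such that one of the following holds: (i) $f|_{]-\infty,p]\cap I}$ and $f|_{[p,\infty[\cap I}$ are both convex; (ii) $f|_{]-\infty,p]\cap I}$ and $f|_{[p,\infty[\cap I}$ are both concave; (iii) $f|_{]-\infty,p]\cap I}$ is convex and $f|_{[p,\infty[\cap I}$ is concave; (iv) $f|_{]-\infty,p]\cap I}$ is concave and $f|_{[p,\infty[\cap I}$ is convex. Then $f$ is star-convex and $p$ is a center of $f$.
   Context: A function $f: I\to\mathbb{R}$ is star-convex if there exists $p\in I$ (a center) such that for every $x\in I$, either $f(tx+(1-t)p)\leq tf(x)+(1-t)f(p)$ for all $t\in[0,1]$, or $f(tx+(1-t)p)\geq tf(x)+(1-t)f(p)$ for all $t\in[0,1]$; i.e. for each $x$ the segment joining $(x,f(x))$ and $(p,f(p))$ lies entirely in the epigraph or entirely in the hypograph of $f$. *)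

From HB Require Import structures.
From mathcomp Require Import all_boot all_order all_algebra.
From mathcomp Require Import all_classical all_reals all_analysis.
Set Implicit Arguments. Unset Strict Implicit. Unset Printing Implicit Defensive.
Import Order.TTheory GRing.Theory Num.Theory numFieldNormedType.Exports.
Local Open Scope classical_set_scope.
Local Open Scope ring_scope.

Definition convex_on (R : realType) (D : set R) (f : R -> R) : Prop :=
  forall x y t, D x -> D y -> 0 <= t <= 1 ->
    f (t * x + (1 - t) * y) <= t * f x + (1 - t) * f y.

Definition concave_on (R : realType) (D : set R) (f : R -> R) : Prop :=
  forall x y t, D x -> D y -> 0 <= t <= 1 ->
    t * f x + (1 - t) * f y <= f (t * x + (1 - t) * y).

Definition star_center (R : realType) (I : set R) (f : R -> R) (p : R) : Prop :=
  I p /\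
  forall x, I x ->
    (forall t, 0 <= t <= 1 -> f (t * x + (1 - t) * p) <= t * f x + (1 - t) * f p)
    \/
    (forall t, 0 <= t <= 1 -> f (t * x + (1 - t) * p) >= t * f x + (1 - t) * f p).

Definition star_convex (R : realType) (I : set R) (f : R -> R) : Prop :=
  exists p, star_center I f p.

(* Every x in I lies in one of the two halves I ∩ ]-oo, p] and I ∩ [p, +oo[,
   and so does p; the segment from (x, f x) to (p, f p) is therefore a chord
   of f restricted to that half, which lies above or below the graph according
   as that restriction is convex or concave. *)
From HB Require Import structures.
From mathcomp Require Import all_boot all_order all_algebra.
From mathcomp Require Import all_classical all_reals all_analysis.
Set Implicit Arguments. Unset Strict Implicit. Unset Printing Implicit Defensive.
Import Order.TTheory GRing.Theory Num.Theory numFieldNormedType.Exports.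
Local Open Scope classical_set_scope.
Local Open Scope ring_scope.

Definition convex_or_concave_on (R : realType) (D : set R) (f : R -> R) : Prop :=
  convex_on D f \/ concave_on D f.

Lemma star_center_of_pieces (R : realType) (I : set R) (f : R -> R) (p : R) :
  I p ->
  (forall x, I x -> exists2 D : set R, D x /\ D p & convex_or_concave_on D f) ->
  star_center I f p.
Proof.
move=> Ip pieces; split=> // x Ix.
have [D [Dx Dp] [cvx|ccv]] := pieces x Ix; [left | right] => t t01.
- exact: cvx.
- exact: ccv.
Qed.

Lemma star_center_of_halves (R : realType) (I : set R) (f : R -> R) (p : R) :
  I p ->
  convex_or_concave_on (I `&` [set x | x <= p]) f ->
  convex_or_concave_on (I `&` [set x | p <= x]) f ->
  star_center I f p.
Proof.
move=> Ip left_half right_half; apply: star_center_of_pieces => // x Ix.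
have pp : p <= p := lexx p.
have [xp|/ltW px] := leP x p.
- by exists (I `&` [set x | x <= p]) => //; split.
- by exists (I `&` [set x | p <= x]) => //; split.
Qed.

Theorem proposition4p1 (R : realType) (I : set R) (p : R) (f : R -> R) :
  is_interval I -> I p -> {within I, continuous f} ->
  let L := I `&` [set x | x <= p] in
  let U := I `&` [set x | p <= x] in
  (convex_on L f /\ convex_on U f) \/
  (concave_on L f /\ concave_on U f) \/
  (convex_on L f /\ concave_on U f) \/
  (concave_on L f /\ convex_on U f) ->
  star_convex I f /\ star_center I f p.
Proof.
move=> _ Ip _ L U halves.
have [cL cU] : convex_or_concave_on L f /\ convex_or_concave_on U f.
  case: halves => [[cL cU]|[[cL cU]|[[cL cU]|[cL cU]]]].
  - by split; left.
  - by split; right.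
  - by split; [left | right].
  - by split; [right | left].
have center : star_center I f p by exact: star_center_of_halves.
by split=> //; exists p.
Qed.
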